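(* Let $\mathbb K=\prod_s\mathbb F_s^{alg}/\mathcal D$. Then $\mathbb K\cap\mathbb F^{alg}=\mathfrak K^{alg}$, where $\mathfrak K^{alg}$ is the set of elements of $\mathbb K$ algebraic over $\mathfrak K$ (an algebraic closure of $\mathfrak K$).
   Context: Let $S$ be an infinite set, $\mathcal D$ a nonprincipal ultrafilter on $S$; ultraproducts $\prod_sA_s/\mathcal D$ consist of tuples modulo agreement on a set in $\mathcal D$, classes written $\mathrm{ulim}_sa_s$, componentwise operations. For each $s$ let $\mathbb F_s$ be a field, $\mathfrak F_s=\mathbb F_s(t)$, fix an algebraic closure $\mathfrak F_s^{alg}$ and let $\mathbb F_s^{alg}\subseteq\mathfrak F_s^{alg}$ be the algebraic closure of $\mathbb F_s$ in it. Let $\mathfrak K=\prod_s\mathbb F_s/\mathcal D$, $\mathbb F=\mathfrak K(t)\subseteq\prod_s\mathfrak F_s/\mathcal D$ (via $\sum_i(\mathrm{ulim}_sa_{i,s})t^i\mapsto\mathrm{ulim}_s\sum_ia_{i,s}t^i$), and $\mathbb F^{alg}$ the set of elements of $\prod_s\mathfrak F_s^{alg}/\mathcal D$ algebraic over $\mathbb F$; note $\mathbb K\subseteq\prod_s\mathfrak F_s^{alg}/\mathcal D$. *)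

From HB Require Import structures.
From mathcomp Require Import all_boot all_order all_algebra.
From mathcomp Require Import boolp classical_sets cardinality filter.
Set Implicit Arguments. Unset Strict Implicit. Unset Printing Implicit Defensive.
Import GRing.Theory.
Local Open Scope ring_scope.
Local Open Scope classical_set_scope.

(* Ultraproducts are handled through representatives: an element of
   prod_s A_s / D is represented by x : forall s, A s, and two
   representatives define the same class iff they agree on a set in D.
   All predicates below are invariant under this relation. *)

Definition ueq (S : Type) (D : set_system S) (A : S -> Type)
  (x y : forall s, A s) : Prop := D [set s | x s = y s].

(* F_s(t) = {fraction {poly F s}};  t = 'X%:F;  constants c |-> (c%:P)%:F *)
Definition ratf (F : fieldType) := {fraction {poly F}}.
Definition cst (F : fieldType) (c : F) : ratf F := FracField.tofrac (c%:P).
Definition ratpoly (F : fieldType) (p : {poly F}) : ratf F := FracField.tofrac p.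

Definition is_alg_closure_of (K : fieldType) (L : closedFieldType)
  (emb : {rmorphism K -> L}) : Prop :=
  forall y : L, exists p : {poly K}, p != 0 /\ root (map_poly emb p) y.

(* y in L is algebraic over (the image of) F : y in F_s^alg *)
Definition alg_over_base (F : fieldType) (L : closedFieldType)
  (emb : {rmorphism ratf F -> L}) (y : L) : Prop :=
  exists p : {poly F}, p != 0 /\ root (map_poly (fun c => emb (cst c)) p) y.

Section Ultra.
Variables (S : Type) (D : set_system S) (F : S -> fieldType)
  (L : S -> closedFieldType) (emb : forall s, {rmorphism ratf (F s) -> L s}).

(* image in prod_s L_s / D of ulim_s c_s in K = prod_s F_s / D *)
Definition embK (c : forall s, F s) : forall s, L s := fun s => emb s (cst (c s)).

(* image of a polynomial sum_{i<n} (ulim_s a_{i,s}) t^i in K[t]: ulim_s P_s,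
   where P : forall s, {poly F s} with size (P s) <= n collects the
   coefficients a_{i,s} = (P s)`_i. It is nonzero in K[t] iff some
   coefficient is nonzero in K. *)
Definition Kpoly_nonzero (P : forall s, {poly F s}) (n : nat) : Prop :=
  exists2 i, (i < n)%N & D [set s | (P s)`_i != 0].

(* z (in prod L_s / D) lies in the image of F = K(t) *)
Definition inF (z : forall s, L s) : Prop :=
  exists (n : nat) (P Q : forall s, {poly F s}),
    [/\ forall s, (size (P s) <= n)%N, forall s, (size (Q s) <= n)%N,
        Kpoly_nonzero Q n &
        ueq D z (fun s => emb s (ratpoly (P s) / ratpoly (Q s)))].

Definition inFalg (x : forall s, L s) : Prop :=
  exists (m : nat) (z : nat -> forall s, L s),
    [/\ forall j, (j < m)%N -> inF (z j),
        exists2 j, (j < m)%N & ~ ueq D (z j) (fun s => 0) &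
        ueq D (fun s => \sum_(j < m) z j s * x s ^+ j) (fun s => 0)].

(* x in KK = prod_s F_s^alg / D (as a subset of prod_s L_s / D) *)
Definition inKK (x : forall s, L s) : Prop :=
  exists y : forall s, L s,
    ueq D x y /\ forall s, alg_over_base (@emb s) (y s).

Definition alg_over_K (x : forall s, L s) : Prop :=
  exists (m : nat) (c : nat -> forall s, F s),
    (exists2 j, (j < m)%N & ~ ueq D (embK (c j)) (fun s => 0)) /\
    ueq D (fun s => \sum_(j < m) embK (c j) s * x s ^+ j) (fun s => 0).

Definition inKalg (x : forall s, L s) : Prop := inKK x /\ alg_over_K x.

End Ultra.

From HB Require Import structures.
From mathcomp Require Import all_boot all_order all_algebra.
From mathcomp Require Import boolp classical_sets cardinality filter.
From mathcomp Require Import zify ring.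

(* If x is algebraic over F = K(t), clearing denominators gives, on a D-large
   set of coordinates s, a relation sum_j R_(j,s)(t) x_s^j = 0 with
   R_(j,s) in F_s[t] of degree bounded independently of s. As x lies in KK,
   x_s is algebraic over F_s, and t is transcendental over the algebraic
   closure of F_s in L_s; hence every t-coefficient sum_j (R_(j,s))_i x_s^j
   vanishes. Because the degrees are bounded, a single index i gives a nonzero
   coefficient of R_(j0,s) on a D-large set, which is a nontrivial relation
   for x over K. The converse inclusion holds because K lies in F. *)

Set Implicit Arguments.
Unset Strict Implicit.
Unset Printing Implicit Defensive.
Import GRing.Theory.
Local Open Scope ring_scope.
Local Open Scope classical_set_scope.

Lemma ultra_exists (T : Type) (D : set_system T) (I : finType) (A : I -> set T) :
  UltraFilter D -> D [set t | exists i, A i t] -> exists i, D (A i).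
Proof.
move=> D_ultra DA; apply: contrapT => noA.
have DnA : D [set t | forall i, ~ A i t].
  apply: filter_forall => i.
  have [DAi|//] := in_ultra_setVsetC (A i) D_ultra.
  by case: noA; exists i.
apply: (@filter_not_empty _ D _); apply: filterS (filterI DA DnA).
by move=> t [[i Ait] /(_ i)].
Qed.

Lemma ultra_coef_neq0 (T : Type) (D : set_system T) (R : T -> nzRingType)
    (p : forall t, {poly R t}) (N : nat) :
  UltraFilter D -> (forall t, (size (p t) <= N)%N) -> D [set t | p t != 0] ->
  exists2 i, (i < N)%N & D [set t | (p t)`_i != 0].
Proof.
move=> D_ultra szp Dp.
have [i Di] : exists i : 'I_N, D [set t | (p t)`_i != 0].
  apply: ultra_exists; apply: filterS Dp => t pt_neq0.
  have ltN : ((size (p t)).-1 < N)%N.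
    by apply: leq_trans (szp t); rewrite prednK ?size_poly_gt0.
  by exists (Ordinal ltN); rewrite /= -lead_coefE lead_coef_eq0.
by exists i.
Qed.

Lemma size_mul_prod_leq (R : nzRingType) (I : finType) (P : pred I)
    (p : {poly R}) (q : I -> {poly R}) (n : nat) :
  (size p <= n)%N -> (forall i, size (q i) <= n)%N ->
  (size (p * \prod_(i | P i) q i)%R <= n * #|I|.+1)%N.
Proof.
move=> szp szq.
have szprod : (size (\prod_(i | P i) q i)%R <= (n * #|I|).+1)%N.
  apply: leq_trans (size_poly_prod_leq _ _) _.
  apply: leq_trans (leq_subr _ _) _; rewrite ltnS.
  apply: (@leq_trans (\sum_(i | P i) n)); first exact: leq_sum.
  by rewrite sum_nat_const mulnC leq_mul2l max_card orbT.
apply: leq_trans (size_mul_leq _ _) _; lia.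
Qed.

Lemma mulr_prod_sum_frac (K : fieldType) (m : nat) (a b y : 'I_m -> K) :
  (forall j, b j != 0) ->
  \prod_k b k * \sum_j a j / b j * y j =
  \sum_j a j * (\prod_(k | k != j) b k) * y j.
Proof.
move=> b_neq0; rewrite mulr_sumr; apply: eq_bigr => j _.
rewrite (bigD1 j) //=; field; exact: b_neq0.
Qed.

Lemma map_polyC_hornerX (R : nzRingType) (p : {poly R}) :
  (map_poly polyC p).['X] = p.
Proof.
rewrite horner_coef size_map_polyC -[RHS]coefK poly_def.
by apply: eq_bigr => i _; rewrite coef_map /= mul_polyC.
Qed.

Section Transcendence.
Variables (F : fieldType) (L : closedFieldType) (emb : {rmorphism ratf F -> L}).

Local Notation base := (emb \o @FracField.tofrac _ \o polyC).
Local Notation tX := (emb (ratpoly 'X)).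

Lemma alg_over_base_algebraic (y : L) : alg_over_base emb y -> algebraicOver base y.
Proof. by case=> p [p_neq0 p_root]; exists p. Qed.

Lemma horner_tX (p : {poly F}) : (map_poly base p).[tX] = emb (ratpoly p).
Proof. by rewrite !map_poly_comp !horner_map map_polyC_hornerX. Qed.

Lemma tX_transcendental (q : {poly L}) :
  (forall i, algebraicOver base q`_i) -> root q tX -> q = 0.
Proof.
move=> q_alg q_tX; apply/eqP; apply: contraT => q_neq0.
have [_ /(nthP 0) [i _ <-]|p /monic_neq0 p_neq0] :=
  @integral_root _ _ base _ _ q_neq0 q_tX; first exact/integral_algebraic/q_alg.
by rewrite /root horner_tX fmorph_eq0 tofrac_eq0 (negPf p_neq0).
Qed.

Lemma tX_relation_coef_eq0 (m : nat) (R : 'I_m -> {poly F}) (x : L) :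
  algebraicOver base x -> \sum_j emb (ratpoly (R j)) * x ^+ j = 0 ->
  forall i, \sum_j base (R j)`_i * x ^+ j = 0.
Proof.
move=> x_alg rel i.
have xX_alg e : algebraicOver base (x ^+ e).
  by elim: e => [|e IHe]; rewrite ?expr0 ?exprS;
    [exact: algebraic1 | exact: algebraic_mul].
pose q := \sum_j map_poly base (R j) * (x ^+ j)%:P.
have coef_q k : q`_k = \sum_j base (R j)`_k * x ^+ j.
  by rewrite coef_sum; apply: eq_bigr => j _; rewrite coefMC coef_map.
rewrite -coef_q (@tX_transcendental q) ?coef0 // => [k|].
  rewrite coef_q; apply: (big_ind (algebraicOver base)) => [||j _].
  - exact: algebraic0.
  - exact: algebraic_add.
  - exact/algebraic_mul/xX_alg/algebraic_id.
rewrite /root /q horner_sum; apply/eqP; rewrite -[RHS]rel; apply: eq_bigr => j _.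
by rewrite hornerM hornerC horner_tX.
Qed.

Definition cleared_numerator (m : nat) (P Q : nat -> {poly F}) (j : nat) :=
  P j * \prod_(k < m | k != j :> nat) Q k.

Section ClearDenominators.
Variables (m : nat) (P Q : nat -> {poly F}) (z : nat -> L).
Hypothesis z_frac : forall j, (j < m)%N ->
  Q j != 0 /\ z j = emb (ratpoly (P j) / ratpoly (Q j)).

Lemma cleared_numerator_neq0 (j : nat) :
  (j < m)%N -> z j != 0 -> cleared_numerator m P Q j != 0.
Proof.
move=> jm z_j_neq0; have [_ z_j] := z_frac jm.
rewrite mulf_neq0 //; last by apply/prodf_neq0 => k _; case: (z_frac (ltn_ord k)).
apply: contra_neq z_j_neq0 => P_j_eq0.
by rewrite z_j P_j_eq0 /ratpoly tofrac0 mul0r rmorph0.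
Qed.

Lemma cleared_relation_coef_eq0 (x : L) :
  algebraicOver base x -> \sum_(j < m) z j * x ^+ j = 0 ->
  forall i, \sum_(j < m) base (cleared_numerator m P Q j)`_i * x ^+ j = 0.
Proof.
move=> x_alg rel; apply: tX_relation_coef_eq0 x_alg _.
have Q_neq0 (j : 'I_m) : emb (ratpoly (Q j)) != 0.
  by rewrite fmorph_eq0 tofrac_eq0; case: (z_frac (ltn_ord j)).
transitivity (\prod_(k < m) emb (ratpoly (Q k)) * \sum_(j < m) z j * x ^+ j);
  last by rewrite rel mulr0.
rewrite [X in _ = _ * X](eq_bigr (fun j : 'I_m =>
    emb (ratpoly (P j)) / emb (ratpoly (Q j)) * x ^+ j)); last first.
  by move=> j _; rewrite (proj2 (z_frac (ltn_ord j))) fmorph_div.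
rewrite (@mulr_prod_sum_frac _ m (fun j => emb (ratpoly (P j))) _ (fun j => x ^+ j)) //.
by apply: eq_bigr => j _; rewrite /ratpoly !rmorphM !rmorph_prod.
Qed.

End ClearDenominators.

End Transcendence.

Section Ultraproduct.
Variables (S : Type) (D : set_system S) (F : S -> fieldType)
  (L : S -> closedFieldType) (emb : forall s, {rmorphism ratf (F s) -> L s}).
Hypothesis D_ultra : UltraFilter D.

Lemma Kpoly_nonzero_neq0 (P : forall s, {poly F s}) (n : nat) :
  Kpoly_nonzero D P n -> D [set s | P s != 0].
Proof. by case=> i _; apply: filterS => s; apply: contra_neq => ->; rewrite coef0. Qed.

Lemma inF_embK (c : forall s, F s) : inF D emb (embK emb c).
Proof.
exists 1%N, (fun s => (c s)%:P), (fun _ => 1); split.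
- by move=> s; apply: size_polyC_leq1.
- by move=> s; rewrite size_poly1.
- by exists 0%N => //; apply: filterS filterT => s _ /=; rewrite coef1 oner_eq0.
- by apply: filterS filterT => s _ /=; rewrite /ratpoly tofrac1 divr1.
Qed.

Lemma alg_over_K_inFalg (x : forall s, L s) :
  alg_over_K D emb x -> inFalg D emb x.
Proof.
case=> m [c [c_neq0 rel]]; exists m, (fun j => embK emb (c j)).
by split=> // j _; apply: inF_embK.
Qed.

Lemma inF_uniform (m : nat) (z : nat -> forall s, L s) :
  (forall j, (j < m)%N -> inF D emb (z j)) ->
  exists (n : nat) (P Q : nat -> forall s, {poly F s}), forall j, (j < m)%N ->
    [/\ forall s, (size (P j s) <= n)%N, forall s, (size (Q j s) <= n)%N &
        D [set s | Q j s != 0 /\ z j s = emb s (ratpoly (P j s) / ratpoly (Q j s))]].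
Proof.
move=> z_inF.
have /choice [f f_spec] : forall j, exists t :
    nat * (forall s, {poly F s}) * (forall s, {poly F s}), (j < m)%N ->
    [/\ forall s, (size (t.1.2 s) <= t.1.1)%N, forall s, (size (t.2 s) <= t.1.1)%N,
        Kpoly_nonzero D t.2 t.1.1 &
        ueq D (z j) (fun s => emb s (ratpoly (t.1.2 s) / ratpoly (t.2 s)))].
  move=> j; have [/z_inF [n [P [Q PQ]]]|_] := ltnP j m; first by exists (n, P, Q).
  by exists (0%N, (fun _ => 0), (fun _ => 0)).
exists (\max_(k < m) (f k).1.1)%N, (fun j => (f j).1.2), (fun j => (f j).2).
move=> j jm; have [szP szQ /Kpoly_nonzero_neq0 DQ Dz] := f_spec j jm.
have le_n : ((f j).1.1 <= \max_(k < m) (f k).1.1)%N.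
  exact: (@leq_bigmax _ (fun k : 'I_m => (f k).1.1) (Ordinal jm)).
split=> [s|s|]; [exact: leq_trans le_n | exact: leq_trans le_n |].
by apply: filterS (filterI DQ Dz) => s [].
Qed.

Lemma inFalg_alg_over_K (x : forall s, L s) :
  inKK D emb x -> inFalg D emb x -> alg_over_K D emb x.
Proof.
move=> [y [Dxy y_alg]] [m [z [z_inF [j0 j0m z_j0_neq0] rel]]].
have [n [P [Q PQ]]] := inF_uniform z_inF.
pose R j s := cleared_numerator m (P^~ s) (Q^~ s) j.
pose G := [set s | [/\ x s = y s, z j0 s != 0, \sum_(j < m) z j s * x s ^+ j = 0 &
  forall j, (j < m)%N ->
    Q j s != 0 /\ z j s = emb s (ratpoly (P j s) / ratpoly (Q j s))]].
have DG : D G.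
  have Dz0 : D [set s | z j0 s != 0].
    have [//|] := in_ultra_setVsetC [set s | z j0 s = 0] D_ultra.
    by apply: filterS => s /eqP.
  have Dfrac : D [set s | forall j : 'I_m,
      Q j s != 0 /\ z j s = emb s (ratpoly (P j s) / ratpoly (Q j s))].
    by apply: filter_forall => j; case: (PQ j (ltn_ord j)).
  apply: filterS (filterI (filterI Dxy Dz0) (filterI rel Dfrac)).
  by move=> s [[? ?] [? z_frac]]; split=> // j jm; apply: (z_frac (Ordinal jm)).
have szR s : (size (R j0 s) <= n * m.+1)%N.
  have [szP _ _] := PQ j0 j0m.
  have szQ (k : 'I_m) : (size (Q k s) <= n)%N by have [_ ->] := PQ k (ltn_ord k).
  by rewrite -[m in m.+1]card_ord; apply: size_mul_prod_leq (szP s) szQ.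
have DR : D [set s | R j0 s != 0].
  apply: filterS DG => s; case=> _ z_j0_s _ z_frac.
  exact: (cleared_numerator_neq0 z_frac j0m z_j0_s).
have [i _ Di] := ultra_coef_neq0 D_ultra szR DR.
exists m, (fun j s => (R j s)`_i); split.
  exists j0 => // Dj0; apply: (@filter_not_empty _ D _).
  apply: filterS (filterI Dj0 Di) => s [/eqP].
  by rewrite /embK /cst fmorph_eq0 tofrac_eq0 polyC_eq0 /= => ->.
apply: filterS DG => s; case=> xy _ rel_s z_frac.
apply: (cleared_relation_coef_eq0 z_frac) rel_s _.
by rewrite xy; apply: alg_over_base_algebraic.
Qed.

End Ultraproduct.

Theorem mainTheorem6 (S : Type) (D : set_system S)
  (S_inf : infinite_set [set: S])
  (D_ultra : UltraFilter D) (D_nonprincipal : forall s : S, ~ D [set s])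
  (F : S -> fieldType) (L : S -> closedFieldType)
  (emb : forall s, {rmorphism ratf (F s) -> L s})
  (L_alg : forall s, is_alg_closure_of (emb s)) :
  forall x : forall s, L s,
    (inKK D emb x /\ inFalg D emb x) <-> inKalg D emb x.
Proof.
move=> x; split=> [[KKx Falgx]|[KKx Kalgx]]; split=> //.
- exact: inFalg_alg_over_K.
- exact: alg_over_K_inFalg.
Qed.
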